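(* Let $(\Omega(\mathcal{A}),d)$ be a differential calculus on a complex algebra $\mathcal{A}$ with $\mathcal{E}=\Omega^1(\mathcal{A})$ a finitely generated projective right $\mathcal{A}$-module satisfying: (1) $\mathcal{E}=\mathcal{Z}(\mathcal{E})\otimes_{\mathcal{Z}(\mathcal{A})}\mathcal{A}$; (2) $\mathcal{E}\otimes_{\mathcal{A}}\mathcal{E}=\ker(\wedge)\oplus\mathcal{F}$ with $Q=\wedge|_{\mathcal{F}}:\mathcal{F}\to\Omega^2(\mathcal{A})$ a right $\mathcal{A}$-linear isomorphism; (3) $\sigma(\omega\otimes_{\mathcal{A}}\eta)=\eta\otimes_{\mathcal{A}}\omega$ for all $\omega,\eta\in\mathcal{Z}(\mathcal{E})$. Let $g$ be a pseudo-Riemannian bilinear metric and $\nabla_0$ as in the context. For $\omega,\eta,\theta\in\mathcal{Z}(\mathcal{E})$ define \begin{align*} \psi_{\omega,\theta}(\eta)&=g(\omega\otimes_{\mathcal{A}}dg(\eta\otimes_{\mathcal{A}}\theta))-g(\eta\otimes_{\mathcal{A}}dg(\theta\otimes_{\mathcal{A}}\omega))+g(\theta\otimes_{\mathcal{A}}dg(\omega\otimes_{\mathcal{A}}\eta))\\ &\quad-G_{\eta,\theta}\big((1-\sigma)\nabla_0(\omega)\big)+G_{\omega,\theta}\big((1-\sigma)\nabla_0(\eta)\big)-G_{\eta,\omega}\big((1-\sigma)\nabla_0(\theta)\big). \end{align*} Then $\psi_{\omega,\theta}(\eta)\in\mathcal{Z}(\mathcal{A})$ for all $\omega,\eta,\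theta\in\mathcal{Z}(\mathcal{E})$.
   Context: A differential calculus: $\Omega(\mathcal{A})=\oplus_{j\ge0}\Omega^j(\mathcal{A})$, $\Omega^0=\mathcal{A}$, bimodules $\Omega^j$, an $\mathcal{A}$-bimodule product $\wedge$ adding degrees, $d$ of degree one with $d^2=0$ and the graded Leibniz rule, $\Omega^j$ right-spanned by $da_0\wedge\cdots\wedge da_{j-1}$. $\wedge:\mathcal{E}\otimes_{\mathcal{A}}\mathcal{E}\to\Omega^2(\mathcal{A})$ is the induced product; $P_{\rm sym}$ the idempotent with image $\ker\wedge$ and kernel $\mathcal{F}$; $\sigma=2P_{\rm sym}-1$. $\mathcal{Z}(\mathcal{M})=\{m:am=ma\ \forall a\in\mathcal{A}\}$. A connection is a $\mathbb{C}$-linear $\nabla:\mathcal{E}\to\mathcal{E}\otimes_{\mathcal{A}}\mathcal{E}$ with $\nabla(\omega a)=\nabla(\omega)a+\omega\otimes_{\mathcal{A}}da$. With an idempotent $p\in M_n(\mathcal{A})$, $p(\mathcal{A}^n)=\mathcal{E}$, $\Phi_j=p(e_j)$, $\nabla^{Gr}(\sum_j\Phi_ja_j)=\sum_j\Phi_j\otimes_{\mathcal{A}}da_j$ and $\nabla_0:=\nabla^{Gr}-Q^{-1}\circ(\wedge\circ\nabla^{Gr}+d)$. A pseudo-Riemannian bilinear metric is an $\mathcal{A}$-bimodule map $g:\mathcal{E}\otimes_{\mathcal{A}}\mathcal{E}\to\mathcal{A}$ with $g\circ\sigma=g$ such that $e\mapsto g(e\otimes_{\mathcal{A}}-)$ is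 a right module isomorphism $\mathcal{E}\to\mathrm{Hom}_{\mathcal{A}}(\mathcal{E},\mathcal{A})$. For $\alpha,\beta\in\mathcal{E}$, $G_{\alpha,\beta}:\mathcal{E}\otimes_{\mathcal{A}}\mathcal{E}\to\mathcal{A}$ denotes the (well-defined) map $x\otimes_{\mathcal{A}}y\mapsto g(\alpha\otimes_{\mathcal{A}}x)\,g(\beta\otimes_{\mathcal{A}}y)$, written in the paper as $(g(\alpha\otimes_{\mathcal{A}}-)\otimes_{\mathcal{A}}g(\beta\otimes_{\mathcal{A}}-))$. *)

From HB Require Import structures.
From mathcomp Require Import all_boot all_order all_algebra.
From mathcomp Require Import reals complex.
Set Implicit Arguments. Unset Strict Implicit. Unset Printing Implicit Defensive.
Import GRing.Theory.
Local Open Scope ring_scope.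

Section Defs.
Variables (K : fieldType) (A : algType K).

Definition additive_map (U W : zmodType) (h : U -> W) :=
  forall u v, h (u + v) = h u + h v.

Definition centralA (c : A) := forall a : A, a * c = c * a.

(* A-bimodules; the K-vector space structure is the one induced by
   K -> A, k |-> k%:A, which acts identically on both sides (K-central). *)
Record bimod := Bimod {
  bm_car :> zmodType;
  lmul : A -> bm_car -> bm_car;
  rmul : bm_car -> A -> bm_car;
  lmulDr : forall a x y, lmul a (x + y) = lmul a x + lmul a y;
  lmulDl : forall a b x, lmul (a + b) x = lmul a x + lmul b x;
  rmulDl : forall a x y, rmul (x + y) a = rmul x a + rmul y a;
  rmulDr : forall a b x, rmul x (a + b) = rmul x a + rmul x b;
  lmulA : forall a b x, lmul (a * b) x = lmul a (lmul b x);
  rmulA : forall a b x, rmul x (a * b) = rmul (rmul x a) b;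
  lmul1 : forall x, lmul 1 x = x;
  rmul1 : forall x, rmul x 1 = x;
  lrmulA : forall a b x, rmul (lmul a x) b = lmul a (rmul x b);
  scal_central : forall (k : K) x, lmul (k%:A) x = rmul x (k%:A)
}.

Definition centralM (M : bimod) (m : M) := forall a : A, lmul a m = rmul m a.

Definition balanced (M N : bimod) (W : zmodType) (f : M -> N -> W) :=
  [/\ forall x x' y, f (x + x') y = f x y + f x' y,
      forall x y y', f x (y + y') = f x y + f x y'
    & forall x a y, f (rmul x a) y = f x (lmul a y)].

(* The tensor product M (x)_A N of bimodules, given by its universal property
   (for balanced biadditive maps into abelian groups), together with its
   induced bimodule structure. *)
Record tensor (M N : bimod) := Tensor {
  tn_car :> bimod;
  tens : M -> N -> tn_car;
  tens_bal : balanced tens;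
  tens_lmul : forall a x y, lmul a (tens x y) = tens (lmul a x) y;
  tens_rmul : forall a x y, rmul (tens x y) a = tens x (rmul y a);
  tens_lift : forall W : zmodType, (M -> N -> W) -> tn_car -> W;
  tens_liftP : forall (W : zmodType) (f : M -> N -> W), balanced f ->
      additive_map (tens_lift f) /\ (forall x y, tens_lift f (tens x y) = f x y);
  tens_uniq : forall (W : zmodType) (h1 h2 : tn_car -> W),
      additive_map h1 -> additive_map h2 ->
      (forall x y, h1 (tens x y) = h2 (tens x y)) -> forall t, h1 t = h2 t
}.

(* A differential calculus, truncated at degree 2 (only Omega^0 = A,
   Omega^1, Omega^2 enter the statement; any such truncated calculus extends
   to a full one by Omega^j = 0 for j >= 3). *)
Record calculus := Calculus {
  Om1 : bimod;
  Om2 : bimod;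
  d0 : A -> Om1;
  d1 : Om1 -> Om2;
  wedge : Om1 -> Om1 -> Om2;
  d0_lin : forall (k : K) a b, d0 (k *: a + b) = lmul (k%:A) (d0 a) + d0 b;
  d1_lin : forall (k : K) x y, d1 (lmul (k%:A) x + y) = lmul (k%:A) (d1 x) + d1 y;
  wedge_bal : balanced wedge;
  wedge_lmul : forall a x y, lmul a (wedge x y) = wedge (lmul a x) y;
  wedge_rmul : forall a x y, rmul (wedge x y) a = wedge x (rmul y a);
  d0M : forall a b, d0 (a * b) = rmul (d0 a) b + lmul a (d0 b);
  d1_rmul : forall x a, d1 (rmul x a) = rmul (d1 x) a - wedge x (d0 a);
  d1_lmul : forall a x, d1 (lmul a x) = wedge (d0 a) x + lmul a (d1 x);
  d1d0 : forall a, d1 (d0 a) = 0;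
  span1 : forall x : Om1, exists s : seq (A * A),
      x = \sum_(q <- s) rmul (d0 q.1) q.2;
  span2 : forall w : Om2, exists s : seq (A * A * A),
      w = \sum_(q <- s) rmul (wedge (d0 q.1.1) (d0 q.1.2)) q.2
}.

Section Calc.
Variables (Om : calculus) (T : tensor (Om1 Om) (Om1 Om)).

Definition wedgeT : T -> Om2 Om := @tens_lift _ _ T _ (@wedge Om).

(* Omega^1 = p A^n as right A-modules, for an idempotent p in M_n(A):
   coord is a right A-linear bijection from Omega^1 onto p A^n (column vectors
   'I_n -> A), and Phi j = p(e_j) is the element with coordinates p(e_j). *)
Definition proj_presentation (n : nat) (p : 'M[A]_n)
    (coord : Om1 Om -> 'I_n -> A) (Phi : 'I_n -> Om1 Om) :=
  [/\ p *m p = p,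
      forall x y j, coord (x + y) j = coord x j + coord y j,
      forall x a j, coord (rmul x a) j = coord x j * a,
      forall x y, coord x =1 coord y -> x = y
    & [/\ forall x j, \sum_k p j k * coord x k = coord x j,
      forall v : 'I_n -> A, (forall j, \sum_k p j k * v k = v j) ->
         exists x, coord x =1 v
    & forall j k, coord (Phi j) k = p k j]].

Definition nablaGr n (coord : Om1 Om -> 'I_n -> A) (Phi : 'I_n -> Om1 Om)
    (x : Om1 Om) : T :=
  \sum_(j < n) tens T (Phi j) (d0 Om (coord x j)).

(* E (x)_A E = ker(wedge) (+) F with Q = wedge|_F an isomorphism onto Omega^2
   (F a right A-submodule); Qinv is the inverse of Q. *)
Definition splitting (F : pred T) (Qinv : Om2 Om -> T) :=
  [/\ 0 \in F,
      forall t u, t \in F -> u \in F -> t + u \in F,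
      forall t a, t \in F -> rmul t a \in F,
      forall t, t \in F -> wedgeT t = 0 -> t = 0
    & forall w, Qinv w \in F /\ wedgeT (Qinv w) = w].

(* P_sym : idempotent with image ker(wedge) and kernel F; sigma = 2 P_sym - 1 *)
Definition Psym (Qinv : Om2 Om -> T) (t : T) : T := t - Qinv (wedgeT t).
Definition sigma (Qinv : Om2 Om -> T) (t : T) : T := Psym Qinv t *+ 2 - t.

Definition nabla0 n coord Phi (Qinv : Om2 Om -> T) (x : Om1 Om) : T :=
  @nablaGr n coord Phi x - Qinv (wedgeT (@nablaGr n coord Phi x) + d1 x).

(* hypothesis (1): E = Z(E) (x)_{Z(A)} A, i.e. the multiplication map
   Z(E) (x)_{Z(A)} A -> E, z (x) a |-> z a, is an isomorphism; stated as the
   universal property of the tensor product over Z(A) for that map. *)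
Definition central_generated :=
  forall (W : zmodType) (f : Om1 Om -> A -> W),
    (forall z z' a, centralM z -> centralM z' -> f (z + z') a = f z a + f z' a) ->
    (forall z a a', centralM z -> f z (a + a') = f z a + f z a') ->
    (forall z c a, centralM z -> centralA c -> f (rmul z c) a = f z (c * a)) ->
    exists h : Om1 Om -> W,
      [/\ additive_map h,
          forall z a, centralM z -> h (rmul z a) = f z a
        & forall h' : Om1 Om -> W, additive_map h' ->
            (forall z a, centralM z -> h' (rmul z a) = f z a) ->
            forall x, h' x = h x].

Definition pr_metric (Qinv : Om2 Om -> T) (g : T -> A) :=
  [/\ additive_map g,
      forall a t, g (lmul a t) = a * g t,
      forall t a, g (rmul t a) = g t * a
    & [/\ forall t, g (sigma Qinv t) = g t,
      forall e, (forall y, g (tens T e y) = 0) -> e = 0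
    & forall phi : Om1 Om -> A, additive_map phi ->
        (forall y a, phi (rmul y a) = phi y * a) ->
        exists e, forall y, g (tens T e y) = phi y]].

Definition Gmap (g : T -> A) (al be : Om1 Om) : T -> A :=
  @tens_lift _ _ T _ (fun x y => g (tens T al x) * g (tens T be y)).

Definition psi n coord Phi Qinv (g : T -> A) (om th et : Om1 Om) : A :=
  let N := @nabla0 n coord Phi Qinv in
  let S := fun t => t - sigma Qinv t in
    g (tens T om (d0 Om (g (tens T et th))))
  - g (tens T et (d0 Om (g (tens T th om))))
  + g (tens T th (d0 Om (g (tens T om et))))
  - Gmap g et th (S (N om))
  + Gmap g om th (S (N et))
  - Gmap g et om (S (N th)).

End Calc.
End Defs.

From HB Require Import structures.
From mathcomp Require Import all_boot all_order all_algebra.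
From mathcomp Require Import reals complex.
Import GRing.Theory.
Local Open Scope ring_scope.

(* Every term of psi is assembled from central elements by operations that
   preserve centrality.  By (1), a central scalar c satisfies c x = x c for all
   one-forms x, and, together with (3) and wedge o sigma = - wedge, a central
   one-form o satisfies o /\ x = - x /\ o; the Leibniz rules then make dc and
   do central.  Again by (1), sigma is a bimodule map, so
   (1 - sigma) nabla0(o) = 2 Q^-1(wedge nabla0(o)) = - 2 Q^-1(do) is central.
   Finally g and G_{a,b} (a, b central) are A-bilinear, hence send central
   tensors to central elements of A. *)

Section AdditiveMap.
Context {U W : zmodType} {h : U -> W}.
Hypothesis h_add : additive_map h.

Lemma additive_map0 : h 0 = 0.
Proof. by apply: (addrI (h 0)); rewrite -h_add !addr0. Qed.

Lemma additive_mapN x : h (- x) = - h x.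
Proof. by apply: (addrI (h x)); rewrite -h_add !subrr additive_map0. Qed.

Lemma additive_mapB x y : h (x - y) = h x - h y.
Proof. by rewrite h_add additive_mapN. Qed.

Lemma additive_mapMn x k : h (x *+ k) = h x *+ k.
Proof.
by elim: k => [|k IHk]; rewrite ?mulr0n ?additive_map0 // !mulrS h_add IHk.
Qed.

End AdditiveMap.

Section Bimodule.
Context {K : fieldType} {A : algType K} {M : bimod A}.

Lemma lmul_additive (a : A) : additive_map (@lmul _ _ M a).
Proof. by move=> x y; rewrite lmulDr. Qed.

Lemma rmul_additive (a : A) : additive_map (fun x : M => rmul x a).
Proof. by move=> x y; rewrite rmulDl. Qed.

Lemma lmulNr a (x : M) : lmul a (- x) = - lmul a x.
Proof. exact: additive_mapN (lmul_additive a) x. Qed.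

Lemma lmulBr a (x y : M) : lmul a (x - y) = lmul a x - lmul a y.
Proof. exact: additive_mapB (lmul_additive a) x y. Qed.

Lemma lmulMnr a (x : M) k : lmul a (x *+ k) = lmul a x *+ k.
Proof. exact: additive_mapMn (lmul_additive a) x k. Qed.

Lemma rmul0l a : rmul (0 : M) a = 0.
Proof. exact: additive_map0 (rmul_additive a). Qed.

Lemma rmulNl a (x : M) : rmul (- x) a = - rmul x a.
Proof. exact: additive_mapN (rmul_additive a) x. Qed.

Lemma rmulBl a (x y : M) : rmul (x - y) a = rmul x a - rmul y a.
Proof. exact: additive_mapB (rmul_additive a) x y. Qed.

Lemma rmulMnl a (x : M) k : rmul (x *+ k) a = rmul x a *+ k.
Proof. exact: additive_mapMn (rmul_additive a) x k. Qed.

Lemma rmulN1 (x : M) : rmul x (-1) = - x.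
Proof.
by rewrite (additive_mapN (h := rmul x) (fun a b => rmulDr a b x)) rmul1.
Qed.

End Bimodule.

Section Center.
Context {K : fieldType} {A : algType K}.

Lemma centralAD (x y : A) : centralA x -> centralA y -> centralA (x + y).
Proof. by move=> cx cy a; rewrite mulrDr mulrDl cx cy. Qed.

Lemma centralAB (x y : A) : centralA x -> centralA y -> centralA (x - y).
Proof. by move=> cx cy a; rewrite mulrBr mulrBl cx cy. Qed.

End Center.

Section Tensor.
Context {K : fieldType} {A : algType K} {M N : bimod A} {T : tensor M N}.

Lemma centralM_tens {x : M} {y : N} :
  centralM x -> centralM y -> centralM (tens T x y).
Proof.
have [_ _ tens_middle] := tens_bal T.
by move=> cx cy a; rewrite tens_lmul cx tens_middle cy tens_rmul.
Qed.

Section Lift.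
Context {W : zmodType} {f : M -> N -> W} {L : W -> W}.
Hypotheses (f_bal : balanced f) (L_add : additive_map L).

Lemma tens_lift_lmul a : (forall x y, f (lmul a x) y = L (f x y)) ->
  forall t : T, tens_lift f (lmul a t) = L (tens_lift f t).
Proof.
have [lift_add lift_tens] := tens_liftP T f_bal.
move=> fL; apply: tens_uniq => [u v|u v|x y].
- by rewrite lmulDr lift_add.
- by rewrite lift_add L_add.
- by rewrite tens_lmul !lift_tens fL.
Qed.

Lemma tens_lift_rmul a : (forall x y, f x (rmul y a) = L (f x y)) ->
  forall t : T, tens_lift f (rmul t a) = L (tens_lift f t).
Proof.
have [lift_add lift_tens] := tens_liftP T f_bal.
move=> fR; apply: tens_uniq => [u v|u v|x y].
- by rewrite rmulDl lift_add.
- by rewrite lift_add L_add.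
- by rewrite tens_rmul !lift_tens fR.
Qed.

End Lift.

Lemma centralA_tens_lift (f : M -> N -> A) : balanced f ->
  (forall a x y, f (lmul a x) y = a * f x y) ->
  (forall a x y, f x (rmul y a) = f x y * a) ->
  forall t : T, centralM t -> centralA (tens_lift f t).
Proof.
move=> f_bal fL fR t ct a.
rewrite -(tens_lift_lmul (L := *%R a) f_bal (mulrDr a) a) // ct.
by rewrite (tens_lift_rmul (L := *%R^~ a) f_bal (fun u v => mulrDl u v a) a).
Qed.

End Tensor.

Section Calculus.
Context {K : fieldType} {A : algType K} {Om : calculus A}.
Context {T : tensor (Om1 Om) (Om1 Om)}.

Lemma wedgeT_additive : additive_map (@wedgeT _ _ Om T).
Proof. exact: (tens_liftP T (wedge_bal Om)).1. Qed.

Lemma wedgeT_tens x y : wedgeT (tens T x y) = wedge x y.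
Proof. exact: (tens_liftP T (wedge_bal Om)).2. Qed.

Lemma wedgeT_lmul a (t : T) : wedgeT (lmul a t) = lmul a (wedgeT t).
Proof.
apply: (tens_lift_lmul (wedge_bal Om) (lmul_additive a)) => x y.
by rewrite wedge_lmul.
Qed.

Lemma wedgeT_rmul a (t : T) : wedgeT (rmul t a) = rmul (wedgeT t) a.
Proof.
apply: (tens_lift_rmul (L := fun w => rmul w a) (wedge_bal Om) (rmul_additive a)).
by move=> x y; rewrite wedge_rmul.
Qed.

Section Splitting.
Context {F : pred T} {Qinv : Om2 Om -> T}.
Hypothesis split : splitting F Qinv.

Lemma wedgeT_Qinv w : wedgeT (Qinv w) = w.
Proof. by case: split => _ _ _ _ /(_ w) []. Qed.

Lemma Qinv_in w : Qinv w \in F.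
Proof. by case: split => _ _ _ _ /(_ w) []. Qed.

Lemma splitting_inj t u : t \in F -> u \in F -> wedgeT t = wedgeT u -> t = u.
Proof.
case: split => _ FD FR Finj _ Ft Fu tu; apply/eqP; rewrite -subr_eq0; apply/eqP.
apply: Finj; first by rewrite FD // -rmulN1 FR.
by rewrite (additive_mapB wedgeT_additive) tu subrr.
Qed.

Lemma Qinv_additive : additive_map Qinv.
Proof.
case: split => _ FD _ _ _ w w'.
apply: splitting_inj; rewrite ?Qinv_in ?FD ?Qinv_in //.
by rewrite wedgeT_additive !wedgeT_Qinv.
Qed.

Lemma Qinv_rmul w a : Qinv (rmul w a) = rmul (Qinv w) a.
Proof.
case: split => _ _ FR _ _.
apply: splitting_inj; rewrite ?Qinv_in ?FR ?Qinv_in //.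
by rewrite wedgeT_rmul !wedgeT_Qinv.
Qed.

Lemma sigmaE t : sigma Qinv t = t - Qinv (wedgeT t) *+ 2.
Proof. by rewrite /sigma /Psym !mulr2n addrAC addrA subrK opprD addrA. Qed.

Lemma subr_sigma t : t - sigma Qinv t = Qinv (wedgeT t) *+ 2.
Proof. by rewrite sigmaE opprB addrC subrK. Qed.

Lemma wedgeT_sigma t : wedgeT (sigma Qinv t) = - wedgeT t.
Proof.
rewrite sigmaE (additive_mapB wedgeT_additive) (additive_mapMn wedgeT_additive).
by rewrite wedgeT_Qinv mulr2n opprD addrA subrr add0r.
Qed.

Lemma sigma_additive : additive_map (sigma Qinv).
Proof. by move=> t u; rewrite !sigmaE wedgeT_additive Qinv_additive mulrnDl opprD addrACA. Qed.

Lemma sigma_rmul t a : sigma Qinv (rmul t a) = rmul (sigma Qinv t) a.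
Proof. by rewrite !sigmaE wedgeT_rmul Qinv_rmul rmulBl rmulMnl. Qed.

Lemma wedgeT_nabla0 n coord Phi x :
  wedgeT (@nabla0 _ _ Om T n coord Phi Qinv x) = - d1 x.
Proof.
by rewrite /nabla0 (additive_mapB wedgeT_additive) wedgeT_Qinv opprD addrA subrr add0r.
Qed.

End Splitting.

Section CentralGeneration.
Hypothesis CG : central_generated Om.

Lemma central_generated_ext {W : zmodType} (h1 h2 : Om1 Om -> W) :
  additive_map h1 -> additive_map h2 ->
  (forall z a, centralM z -> h1 (rmul z a) = h2 (rmul z a)) -> h1 =1 h2.
Proof.
move=> h1_add h2_add e x.
have [|||h [_ _ h_uniq]] := CG W (fun z a => h1 (rmul z a)).
- by move=> z z' a _ _; rewrite rmulDl h1_add.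
- by move=> z a a' _; rewrite rmulDr h1_add.
- by move=> z c a _ _; rewrite rmulA.
by rewrite (h_uniq h1) ?(h_uniq h2) // => z a cz; rewrite e.
Qed.

Lemma central_tens_ext {W : zmodType} (h1 h2 : T -> W) :
  additive_map h1 -> additive_map h2 ->
  (forall z z' c, centralM z -> centralM z' ->
     h1 (rmul (tens T z z') c) = h2 (rmul (tens T z z') c)) -> h1 =1 h2.
Proof.
move=> h1_add h2_add e; apply: tens_uniq => // x y.
have [tensDl tensDr tens_middle] := tens_bal T.
move: x; apply: central_generated_ext => [u v|u v|z a cz].
- by rewrite tensDl h1_add.
- by rewrite tensDl h2_add.
move: y; apply: central_generated_ext => [u v|u v|z' b cz'].
- by rewrite tensDr h1_add.
- by rewrite tensDr h2_add.
by rewrite tens_middle -lrmulA cz' -rmulA -tens_rmul e.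
Qed.

Lemma lmul_centralA c (x : Om1 Om) : centralA c -> lmul c x = rmul x c.
Proof.
move=> cc; move: x; apply: central_generated_ext => [||z a cz].
- exact: lmul_additive.
- exact: rmul_additive.
by rewrite -lrmulA cz -!rmulA cc.
Qed.

Lemma centralM_d0 c : centralA c -> centralM (d0 Om c).
Proof.
move=> cc a; apply: (addrI (rmul (d0 Om a) c)).
by rewrite -d0M cc d0M lmul_centralA // addrC.
Qed.

Section Symmetric.
Context {F : pred T} {Qinv : Om2 Om -> T}.
Hypothesis split : splitting F Qinv.
Hypothesis sigma_central_flip : forall z z', centralM z -> centralM z' ->
  sigma Qinv (tens T z z') = tens T z' z.

Lemma wedge_centralC {o : Om1 Om} : centralM o -> forall x, wedge o x = - wedge x o.
Proof.
move=> co x; apply/eqP; rewrite -addr_eq0; apply/eqP; move: x.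
have [wedgeDl wedgeDr wedge_middle] := wedge_bal Om.
apply: (central_generated_ext (fun x => wedge o x + wedge x o) (fun=> 0)).
- by move=> x y; rewrite wedgeDr wedgeDl addrACA.
- by move=> x y; rewrite addr0.
move=> z a cz; rewrite -wedge_rmul wedge_middle co -wedge_rmul -rmulDl -!wedgeT_tens.
by rewrite -(sigma_central_flip _ _ co cz) (wedgeT_sigma split) subrr rmul0l.
Qed.

Lemma centralM_d1 (o : Om1 Om) : centralM o -> centralM (d1 o).
Proof.
move=> co a; apply: (addrI (wedge (d0 Om a) o)).
by rewrite -d1_lmul co d1_rmul (wedge_centralC co) opprK addrC.
Qed.

Lemma sigma_lmul a (t : T) : sigma Qinv (lmul a t) = lmul a (sigma Qinv t).
Proof.
move: t; apply: central_tens_ext => [u v|u v|z z' c cz cz'].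
- by rewrite lmulDr (sigma_additive split).
- by rewrite (sigma_additive split) lmulDr.
rewrite -lrmulA (centralM_tens cz cz') -rmulA !(sigma_rmul split).
by rewrite !sigma_central_flip // rmulA -(centralM_tens cz' cz) lrmulA.
Qed.

Lemma centralM_Qinv_mul2 w : centralM w -> centralM (Qinv w *+ 2).
Proof.
move=> cw a; have := sigma_lmul a (Qinv w).
rewrite !sigmaE wedgeT_lmul (wedgeT_Qinv split) cw (Qinv_rmul split).
by rewrite lmulBr lmulMnr rmulMnl => /addrI/oppr_inj ->.
Qed.

Lemma centralM_subr_sigma_nabla0 n coord Phi (o : Om1 Om) : centralM o ->
  let t := @nabla0 _ _ Om T n coord Phi Qinv o in centralM (t - sigma Qinv t).
Proof.
move=> co /=; rewrite subr_sigma (wedgeT_nabla0 split).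
by apply: centralM_Qinv_mul2 => a; rewrite lmulNr rmulNl centralM_d1.
Qed.

End Symmetric.
End CentralGeneration.

Section Metric.
Context {g : T -> A}.
Hypotheses (g_add : additive_map g)
  (g_lmul : forall a t, g (lmul a t) = a * g t)
  (g_rmul : forall t a, g (rmul t a) = g t * a).

Lemma centralA_metric t : centralM t -> centralA (g t).
Proof. by move=> ct a; rewrite -g_lmul ct g_rmul. Qed.

Lemma centralA_Gmap al be t : centralM al -> centralM be -> centralM t ->
  centralA (Gmap g al be t).
Proof.
have [_ tensDr tens_middle] := tens_bal T.
move=> cal cbe; apply: centralA_tens_lift => [|b x y|b x y].
- split=> [x x' y|x y y'|x b y]; first by rewrite tensDr g_add mulrDl.
    by rewrite tensDr g_add mulrDr.
  by rewrite -tens_rmul g_rmul -mulrA -g_lmul tens_lmul cbe tens_middle.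
- by rewrite -tens_middle -cal -tens_lmul g_lmul mulrA.
- by rewrite -tens_rmul g_rmul mulrA.
Qed.

End Metric.
End Calculus.

Theorem lemma6p8 (R : realType) (A : algType R[i]) (Om : calculus A)
    (T : tensor (Om1 Om) (Om1 Om))
    (n : nat) (p : 'M[A]_n) (coord : Om1 Om -> 'I_n -> A) (Phi : 'I_n -> Om1 Om)
    (F : pred T) (Qinv : Om2 Om -> T) (g : T -> A) :
  proj_presentation p coord Phi ->
  central_generated Om ->
  splitting F Qinv ->
  (forall om et, centralM om -> centralM et ->
     sigma Qinv (tens T om et) = tens T et om) ->
  pr_metric Qinv g ->
  forall om et th : Om1 Om, centralM om -> centralM et -> centralM th ->
    centralA (psi coord Phi Qinv g om th et).
Proof.
move=> _ CG split sigma_flip [g_add g_lmul g_rmul _] om et th com cet cth.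
have metric_term x y z : centralM x -> centralM y -> centralM z ->
    centralA (g (tens T x (d0 Om (g (tens T y z))))).
  move=> cx cy cz; apply: (centralA_metric g_lmul g_rmul).
  apply: centralM_tens cx _; apply: (centralM_d0 CG).
  exact: (centralA_metric g_lmul g_rmul) (centralM_tens cy cz).
have G_term x y o : centralM x -> centralM y -> centralM o ->
    centralA (Gmap g x y (nabla0 coord Phi Qinv o - sigma Qinv (nabla0 coord Phi Qinv o))).
  move=> cx cy co; apply: (centralA_Gmap g_add g_lmul g_rmul _ _ _ cx cy).
  exact: (centralM_subr_sigma_nabla0 CG split sigma_flip).
by rewrite /psi; repeat (apply: centralAB || apply: centralAD); auto.
Qed.
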